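(* Let $n>0$. Then $a(m)>a(n)$ for all $m>n$ if and only if the Fibonacci representation $(n)_F$ belongs to the regular language $10(100^*10)^*0^*$.
   Context: Let $(F_n)_{n\ge 0}$ be the Fibonacci numbers: $F_0=0$, $F_1=1$, $F_n=F_{n-1}+F_{n-2}$ for $n\ge 2$. Define $(a(n))_{n\ge 0}$ (OEIS A105774) by $a(0)=0$, $a(1)=1$, and for $n\ge 2$, $a(n)=F_{j+1}-a(n-F_j)$, where $j\ge 2$ is the unique index with $F_j<n\le F_{j+1}$. The Fibonacci (Zeckendorf) representation $(n)_F$ of $n\ge1$ is the unique binary string $e_1e_2\cdots e_t$ with $e_1=1$, no two consecutive $1$'s, and $n=\sum_{i=1}^t e_iF_{t-i+2}$. In the regular expression, juxtaposition is concatenation, $w^*$ denotes zero or more repetitions of $w$, and the star applies to the immediately preceding symbol or parenthesized group (so $100^*10$ denotes the strings $10\,0^k\,10$, $k\ge0$). *)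

From mathcomp Require Import all_boot all_order all_algebra.
Set Implicit Arguments. Unset Strict Implicit. Unset Printing Implicit Defensive.
Import Order.TTheory GRing.Theory Num.Theory.

Fixpoint fib (n : nat) : nat :=
  match n with
  | 0 => 0
  | 1 => 1
  | (m.+1 as p).+1 => fib p + fib m
  end.

(* For n >= 2: the unique j >= 2 with F_j < n <= F_{j+1}.  It is computed as
   the least j with n <= F_{j+1} (searched in 0..n, which suffices since
   n <= F_{n+1}); for n >= 2 this least j is >= 2 and satisfies F_j < n. *)
Definition fib_idx (n : nat) : nat :=
  find (fun j => n <= fib j.+1) (iota 0 n.+1).

(* A105774, with values in int (so the subtraction is the true one).
   a(0)=0, a(1)=1, a(n) = F_{j+1} - a(n - F_j) for n >= 2.
   The recursion is run with fuel n, which suffices since n - F_j < n. *)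
Fixpoint a_aux (fuel n : nat) : int :=
  match fuel with
  | 0 => 0%R
  | k.+1 =>
      if n <= 1 then (n%:Z)%R
      else let j := fib_idx n in
           ((fib j.+1)%:Z - a_aux k (n - fib j))%R
  end.

Definition a (n : nat) : int := a_aux n n.

(* Value of a binary string e_1 ... e_t : sum_i e_i F_{t-i+2}
   (0-based position i has weight F_{t-i+1}). *)
Definition fib_val (s : seq bool) : nat :=
  \sum_(i < size s) (nth false s i) * fib (size s - i).+1.

Definition zeck_rep (n : nat) (s : seq bool) : Prop :=
  [/\ head false s = true,
      (forall i, i.+1 < size s -> ~~ (nth false s i && nth false s i.+1))
    & fib_val s = n].

(* The regular language 10(100^*10)^*0^*, with 1 = true and 0 = false. *)
Definition block (k : nat) : seq bool :=
  [:: true; false] ++ nseq k false ++ [:: true; false].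

Definition in_lang (s : seq bool) : Prop :=
  exists (ks : seq nat) (m : nat),
    s = [:: true; false] ++ flatten (map block ks) ++ nseq m false.

From mathcomp Require Import all_boot all_order all_algebra zify.
Import Order.TTheory GRing.Theory Num.Theory.
Set Implicit Arguments. Unset Strict Implicit.

(* If F_j < n <= F_{j+1} (j >= 2) then F_j <= a(n) < F_{j+1}, so
   a(n) < a(m) whenever n <= F_i < m for some i >= 3.  Call n a record when
   a(n) < a(m) for all m > n.  Every F_i (i >= 3), i.e. every string 10 0^k,
   is thus a record.  Since a(F_{p+5} + F_{p+3} + x) = F_{p+6} - F_{p+4} + a(x)
   for 0 < x <= F_{p+2}, the number F_{p+5} + F_{p+3} + u (0 < u < F_{p+2})
   is a record exactly when u is: this is the recursion 1010 0^k s' -> s' of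
   the language.  The remaining strings 1, 101, 1010 0^k and 100 w (w nonzero)
   are each beaten by an explicit later argument. *)

Lemma fibSS n : fib n.+2 = fib n.+1 + fib n. Proof. by []. Qed.

Lemma fib_leS n : fib n <= fib n.+1.
Proof. by case: n => [|n] //; rewrite fibSS leq_addr. Qed.

Lemma fib_mono m n : m <= n -> fib m <= fib n.
Proof.
move=> /subnK <-; elim: (n - m) => [|k IH] //.
by rewrite addSn (leq_trans IH) // fib_leS.
Qed.

Lemma fib_gt0 n : 0 < n -> 0 < fib n.
Proof. exact: fib_mono. Qed.

Lemma leq_fibS n : n <= fib n.+1.
Proof.
suff: n <= fib n.+1 /\ n.+1 <= fib n.+2 by case.
elim: n => [|n [IH1 IH2]] //; split => //.
rewrite fibSS; have := fib_gt0 (ltn0Sn n); lia.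
Qed.

Lemma fib_idx_spec n : 2 <= n ->
  [/\ 2 <= fib_idx n, fib (fib_idx n) < n & n <= fib (fib_idx n).+1].
Proof.
move=> n_ge2; rewrite /fib_idx; set p := (fun j => n <= fib j.+1).
have has_p : has p (iota 0 n.+1).
  by apply/hasP; exists n; [rewrite mem_iota; lia | exact: leq_fibS].
set J := find p (iota 0 n.+1).
have J_lt : J < n.+1 by rewrite -(size_iota 0 n.+1) -has_find.
have pJ : p J by have := nth_find 0 has_p; rewrite nth_iota.
have J_ge2 : 2 <= J by case E: J => [|[|j]] //; rewrite E /p /= in pJ; lia.
split => //.
have /(_ ltac:(lia)) := before_find 0 (_ : J.-1 < J).
rewrite nth_iota; last lia.
by rewrite /p add0n prednK; [move/negbT; rewrite -ltnNge | lia].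
Qed.

Lemma fib_idx_eq n j : 2 <= j -> fib j < n -> n <= fib j.+1 -> fib_idx n = j.
Proof.
move=> j_ge2 lt_n le_n.
have n_ge2 : 2 <= n by have := fib_gt0 (ltac:(lia) : 0 < j); lia.
have [_ lt_n' le_n'] := fib_idx_spec n_ge2.
by case: (ltngtP (fib_idx n) j) => // /fib_mono; lia.
Qed.

Lemma a_aux_fuel k1 k2 n : n <= k1 -> n <= k2 -> a_aux k1 n = a_aux k2 n.
Proof.
elim: k1 k2 n => [|k1 IH] [|k2] n //=.
- by rewrite leqn0 => /eqP ->.
- by move=> _; rewrite leqn0 => /eqP ->.
case: ifP => // /negbT n_gt1 le_k1 le_k2; congr (_ - _)%R.
have [? ? ?] := fib_idx_spec (ltac:(lia) : 2 <= n).
have := fib_gt0 (ltac:(lia) : 0 < fib_idx n) => ?.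
apply: IH; lia.
Qed.

Lemma a_auxS k n : a_aux k.+1 n = if n <= 1 then (n%:Z)%R
  else ((fib (fib_idx n).+1)%:Z - a_aux k (n - fib (fib_idx n)))%R.
Proof. by []. Qed.

Lemma a_rec n j : 2 <= j -> fib j < n -> n <= fib j.+1 ->
  a n = ((fib j.+1)%:Z - a (n - fib j))%R.
Proof.
move=> j_ge2 lt_n le_n.
have := fib_gt0 (ltac:(lia) : 0 < j) => fib_j_gt0.
have [n' def_n] : exists n', n = n'.+2 by exists (n - 2); lia.
rewrite /a def_n a_auxS -def_n ifF; last lia.
rewrite (fib_idx_eq j_ge2 lt_n le_n); congr (_ - _)%R.
apply: a_aux_fuel; lia.
Qed.

Lemma a1 : a 1 = 1%R. Proof. by []. Qed.

Lemma a_fib_idx_bounds n : 2 <= n ->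
  ((fib (fib_idx n))%:Z <= a n)%R /\ (a n < (fib (fib_idx n).+1)%:Z)%R.
Proof.
elim/ltn_ind: n => n IH n_ge2.
have := fib_idx_spec n_ge2; set j := fib_idx n => -[j_ge2 lt_n le_n].
rewrite (a_rec j_ge2 lt_n le_n).
have [i def_j] : exists i, j = i.+2 by exists (j - 2); lia.
rewrite def_j in lt_n le_n *.
have := fibSS i.+1; have := fib_gt0 (ltn0Sn i) => ? ?.
set r := n - fib i.+2.
suff: (1 <= a r)%R /\ (a r <= (fib i.+1)%:Z)%R by lia.
have [r_lt1|r_gt1|->] := ltngtP r 1; first lia; last by rewrite a1; lia.
have [k_ge2 lt_r le_r] := fib_idx_spec r_gt1.
have := IH r ltac:(have := fib_gt0 (ltn0Sn i.+1); lia) r_gt1.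
have k_lt : fib_idx r < i.+1 by rewrite ltnNge; apply/negP => /fib_mono; lia.
have := fib_mono k_lt; have := fib_gt0 (ltac:(lia) : 0 < fib_idx r); lia.
Qed.

Lemma a_lt_fib i n : 3 <= i -> n <= fib i -> (a n < (fib i)%:Z)%R.
Proof.
move=> i_ge3 le_n; have /= fib_i_ge2 := fib_mono i_ge3.
have [n_lt1|n_gt1|->] := ltngtP n 1; last by rewrite a1; lia.
  by rewrite (_ : n = 0); [change (a 0) with (0 : int); lia | lia].
have [_ lt_n le_n'] := fib_idx_spec n_gt1.
have [_ ub] := a_fib_idx_bounds n_gt1.
have k_lt : fib_idx n < i by rewrite ltnNge; apply/negP => /fib_mono; lia.
have := fib_mono k_lt; lia.
Qed.

Lemma fib_le_a i n : 2 <= i -> fib i < n -> ((fib i)%:Z <= a n)%R.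
Proof.
move=> i_ge2 lt_n.
have n_ge2 : 2 <= n by have := fib_gt0 (ltac:(lia) : 0 < i); lia.
have [_ lt_n' le_n] := fib_idx_spec n_ge2.
have [lb _] := a_fib_idx_bounds n_ge2.
have k_ge : i <= fib_idx n by rewrite leqNgt; apply/negP => /fib_mono; lia.
have := fib_mono k_ge; lia.
Qed.

Lemma a_lt_across_fib i n m : 3 <= i -> n <= fib i -> fib i < m -> (a n < a m)%R.
Proof.
move=> i_ge3 le_n lt_m.
have := a_lt_fib i_ge3 le_n; have := fib_le_a (ltac:(lia) : 2 <= i) lt_m; lia.
Qed.

Local Notation "n .+5" := n.+4.+1 (at level 1, left associativity, format "n .+5") : nat_scope.
Local Notation "n .+6" := n.+4.+2 (at level 1, left associativity, format "n .+6") : nat_scope.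

Definition a_record n := forall m, n < m -> (a n < a m)%R.

Lemma a_record_fib q : a_record (fib q.+3).
Proof. by move=> m; apply: a_lt_across_fib. Qed.

Lemma not_a_record_1 : ~ a_record 1.
Proof. by move=> /(_ 2 isT); vm_compute. Qed.

Lemma not_a_record_4 : ~ a_record 4.
Proof. by move=> /(_ 5 isT); vm_compute. Qed.

(* Beaten by m = F_{p+4} + F_{p+2} + 1. *)
Lemma not_a_record_fib_add p v : 1 <= p -> 1 <= v -> v < fib p.+2 ->
  ~ a_record (fib p.+4 + v).
Proof.
move=> p_ge1 v_ge1 v_lt later.
have := fibSS p.+3; have := fibSS p.+2; have := fibSS p.+1.
have := fib_gt0 (ltn0Sn p) => ? ? ? ?.
have := later (fib p.+4 + fib p.+2 + 1) ltac:(lia).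
rewrite (a_rec (j := p.+4) (n := fib p.+4 + v)); try lia.
rewrite (a_rec (j := p.+4) (n := fib p.+4 + fib p.+2 + 1)); try lia.
have -> : fib p.+4 + v - fib p.+4 = v by lia.
have -> : fib p.+4 + fib p.+2 + 1 - fib p.+4 = fib p.+2 + 1 by lia.
have := a_lt_fib (i := p.+2) ltac:(lia) (ltnW v_lt).
have := fib_le_a (i := p.+2) (n := fib p.+2 + 1) ltac:(lia) ltac:(lia).
lia.
Qed.

(* Beaten by its successor. *)
Lemma not_a_record_fib_add_fib p : ~ a_record (fib p.+5 + fib p.+3).
Proof.
move=> later; have := fib_gt0 (ltn0Sn p.+2) => ?.
have := fibSS p.+4; have := fibSS p.+3; have := fibSS p.+2.
have := fib_gt0 (ltn0Sn p.+1) => ? ? ? ?.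
have := later (fib p.+5 + fib p.+3 + 1) ltac:(lia).
rewrite (a_rec (j := p.+5) (n := fib p.+5 + fib p.+3)); try lia.
rewrite (a_rec (j := p.+5) (n := fib p.+5 + fib p.+3 + 1)); try lia.
have -> : fib p.+5 + fib p.+3 - fib p.+5 = fib p.+3 by lia.
have -> : fib p.+5 + fib p.+3 + 1 - fib p.+5 = fib p.+3 + 1 by lia.
have := a_lt_fib (i := p.+3) (n := fib p.+3) ltac:(lia) (leqnn _).
have := fib_le_a (i := p.+3) (n := fib p.+3 + 1) ltac:(lia) ltac:(lia).
lia.
Qed.

Lemma a_fib_add_fib_add p x : 1 <= x -> x <= fib p.+2 ->
  a (fib p.+5 + fib p.+3 + x) = ((fib p.+6)%:Z - ((fib p.+4)%:Z - a x))%R.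
Proof.
move=> x_ge1 x_le.
have := fibSS p.+4; have := fibSS p.+3; have := fibSS p.+2 => ? ? ?.
rewrite (a_rec (j := p.+5)); try lia.
have -> : fib p.+5 + fib p.+3 + x - fib p.+5 = fib p.+3 + x by lia.
rewrite (a_rec (j := p.+3) (n := fib p.+3 + x)); try lia.
by have -> : fib p.+3 + x - fib p.+3 = x by lia.
Qed.

Lemma a_record_fib_add_fib_add p u : 1 <= p -> 1 <= u -> u < fib p.+2 ->
  a_record (fib p.+5 + fib p.+3 + u) <-> a_record u.
Proof.
move=> p_ge1 u_ge1 u_lt.
have := fibSS p.+4; have := fibSS p.+3; have := fibSS p.+2 => ? ? ?.
split=> later x lt_x.
- have [x_le|x_gt] := leqP x (fib p.+2); last by apply: (a_lt_across_fib (i := p.+2)); lia.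
  have := later (fib p.+5 + fib p.+3 + x) ltac:(lia).
  rewrite !a_fib_add_fib_add; lia.
- have [x_le|x_gt] := leqP x (fib p.+6); last by apply: (a_lt_across_fib (i := p.+6)); lia.
  have -> : x = fib p.+5 + fib p.+3 + (x - fib p.+5 - fib p.+3) by lia.
  have := later (x - fib p.+5 - fib p.+3) ltac:(lia).
  rewrite !a_fib_add_fib_add; lia.
Qed.

Definition no_adjacent_ones (s : seq bool) :=
  forall i, i.+1 < size s -> ~~ (nth false s i && nth false s i.+1).

Lemma no_adjacent_ones_behead b s : no_adjacent_ones (b :: s) -> no_adjacent_ones s.
Proof. by move=> adj i; apply: (adj i.+1). Qed.

Lemma no_adjacent_ones_catl k s :
  no_adjacent_ones (nseq k false ++ s) -> no_adjacent_ones s.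
Proof. by elim: k => [|k IH] //= /no_adjacent_ones_behead. Qed.

Lemma fib_val_nil : fib_val [::] = 0. Proof. by rewrite /fib_val big_ord0. Qed.

Lemma fib_val_cons b s : fib_val (b :: s) = b * fib (size s).+2 + fib_val s.
Proof. by rewrite /fib_val big_ord_recl subn0. Qed.

Lemma fib_val_true_false s : fib_val [:: true, false & s] = fib (size s).+3 + fib_val s.
Proof. by rewrite !fib_val_cons mul0n mul1n. Qed.

Lemma fib_val_nseq k s : fib_val (nseq k false ++ s) = fib_val s.
Proof. by elim: k => [|k IH] //=; rewrite fib_val_cons mul0n. Qed.

Lemma fib_val_lt s : no_adjacent_ones s -> fib_val s < fib (size s).+2.
Proof.
move: {2}(size s).+1 (ltnSn (size s)) => N; elim: N s => [|N IH] // [|[] t].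
- by rewrite fib_val_nil.
- case: t => [|[] u] size_lt adj; first by rewrite fib_val_cons fib_val_nil.
    by have := adj 0 isT.
  rewrite fib_val_true_false; change (size [:: true, false & u]) with (size u).+2.
  have := IH u ltac:(rewrite /= in size_lt; lia).
  move=> /(_ (no_adjacent_ones_behead (no_adjacent_ones_behead adj))).
  have := fibSS (size u).+2; have := fibSS (size u).+1; lia.
- move=> size_lt /no_adjacent_ones_behead adj.
  rewrite fib_val_cons mul0n add0n; change (size (false :: t)) with (size t).+1.
  have := IH t size_lt adj; have := fib_leS (size t).+2; lia.
Qed.

Lemma fib_val_eq0 s : fib_val s = 0 -> s = nseq (size s) false.
Proof.
elim: s => [|[] t IH] //; rewrite fib_val_cons.
  by have := fib_gt0 (ltn0Sn (size t).+1); lia.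
by rewrite mul0n add0n => /IH {1}->.
Qed.

Lemma fib_val_gt0_size s : 0 < fib_val s -> 0 < size s.
Proof. by case: s => //; rewrite fib_val_nil. Qed.

Lemma split_leading_zeros s : 0 < fib_val s ->
  exists k s', s = nseq k false ++ s' /\ head false s' = true.
Proof.
elim: s => [|[] t IH]; first by rewrite fib_val_nil.
  by exists 0, (true :: t).
rewrite fib_val_cons mul0n add0n => /IH [k [s' [-> head_s']]].
by exists k.+1, s'.
Qed.

Lemma in_lang_odd_count s : in_lang s -> odd (count id s).
Proof.
move=> [ks [m ->]].
rewrite !count_cat count_nseq /= mul0n !add0n addn0.
suff -> : count id (flatten (map block ks)) = (size ks).*2 by rewrite odd_double.
elim: ks => [|k ks IH] //=.
by rewrite count_cat IH /block !count_cat count_nseq /=; lia.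
Qed.

Lemma in_lang_100 u : in_lang [:: true, false, false & u] -> fib_val u = 0.
Proof.
move=> [[|k ks] [[|m] //= [->]]].
by rewrite -(cats0 (nseq m false)) fib_val_nseq fib_val_nil.
Qed.

Lemma nseq_false_cat_true_inj k1 k2 x y :
  nseq k1 false ++ true :: x = nseq k2 false ++ true :: y -> k1 = k2 /\ x = y.
Proof.
elim: k1 k2 => [|k1 IH] [|k2] //=; first by case.
by case=> /IH [-> ->].
Qed.

Lemma in_lang_1010 k s : head false s = true ->
  in_lang ([:: true, false, true, false & nseq k false ++ s]) <-> in_lang s.
Proof.
case: s => [|b s] //= ->; split.
- move=> [[|k' ks] [m]]; first by case: m.
  rewrite /= /block -!catA /= => -[/nseq_false_cat_true_inj [_ ->]].
  by exists ks, m.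
- move=> [ks [m def_s]]; exists (k :: ks), m.
  by rewrite /= def_s /block /= -!catA.
Qed.

Lemma zeck_10_zeros w : fib_val w = 0 ->
  a_record (fib_val [:: true, false & w]) /\ in_lang [:: true, false & w].
Proof.
move=> w0; rewrite fib_val_true_false w0 addn0; split; first exact: a_record_fib.
by exists [::], (size w); rewrite /= {1}(fib_val_eq0 w0).
Qed.

Lemma zeck_100 u : 0 < fib_val u -> no_adjacent_ones u ->
  ~ a_record (fib_val [:: true, false, false & u]) /\
  ~ in_lang [:: true, false, false & u].
Proof.
move=> u_pos adj; split; last by move/in_lang_100; lia.
rewrite fib_val_true_false fib_val_cons mul0n add0n /=.
exact: not_a_record_fib_add (fib_val_gt0_size u_pos) u_pos (fib_val_lt adj).
Qed.

Lemma zeck_101_zeros k :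
  ~ a_record (fib_val [:: true, false, true & nseq k false]) /\
  ~ in_lang [:: true, false, true & nseq k false].
Proof.
split; last by move/in_lang_odd_count; rewrite /= count_nseq mul0n.
rewrite fib_val_true_false fib_val_cons -[nseq k false]cats0 fib_val_nseq fib_val_nil.
change (size (true :: _)) with (size (nseq k false ++ [::])).+1.
rewrite cats0 size_nseq mul1n addn0.
by case: k => [|k]; [exact: not_a_record_4 | exact: not_a_record_fib_add_fib].
Qed.

Lemma a_record_1010 k s : 0 < fib_val s -> no_adjacent_ones s ->
  a_record (fib_val [:: true, false, true, false & nseq k false ++ s]) <->
  a_record (fib_val s).
Proof.
move=> s_pos adj; set t := nseq k false ++ s.
rewrite !fib_val_true_false; change (size [:: true, false & t]) with (size t).+2.
rewrite addnA fib_val_nseq.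
have size_st : size s <= size t by rewrite size_cat leq_addl.
have := fib_val_lt adj; have := fib_mono (size_st : (size s).+2 <= (size t).+2).
have := fib_val_gt0_size s_pos => ? ? ?.
apply: a_record_fib_add_fib_add => //; lia.
Qed.

Lemma a_record_iff_in_lang s : head false s = true -> no_adjacent_ones s ->
  a_record (fib_val s) <-> in_lang s.
Proof.
move: {2}(size s) (leqnn (size s)) => N.
elim: N s => [|N IH] [|b t] //= size_le -> {b} adj.
case: t size_le adj => [|[] w] size_le adj.
- rewrite fib_val_cons fib_val_nil; split => [/not_a_record_1 //|].
  by move=> [ks [m []]].
- by have := adj 0 isT.
have [w0|w_pos] := posnP (fib_val w).
  by have [] := zeck_10_zeros w0; tauto.
have adj_w := no_adjacent_ones_behead (no_adjacent_ones_behead adj).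
case: w w_pos size_le adj adj_w => [|[] u] w_pos size_le adj adj_w.
- by rewrite fib_val_nil in w_pos.
- clear w_pos; have [u0|u_pos] := posnP (fib_val u).
    by rewrite (fib_val_eq0 u0); have [] := zeck_101_zeros (size u); tauto.
  case: u u_pos size_le adj adj_w => [|[] v] u_pos size_le adj adj_w.
  + by rewrite fib_val_nil in u_pos.
  + by have := adj 2 isT.
  rewrite fib_val_cons mul0n add0n in u_pos.
  have [k [s' [def_v head_s']]] := split_leading_zeros u_pos.
  have adj_s' : no_adjacent_ones s'.
    apply: (@no_adjacent_ones_catl k); rewrite -def_v.
    exact: no_adjacent_ones_behead (no_adjacent_ones_behead adj_w).
  rewrite def_v fib_val_nseq in u_pos; rewrite def_v a_record_1010 // in_lang_1010 //.
  by apply: IH => //; move: size_le; rewrite def_v /= size_cat size_nseq; lia.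
- rewrite fib_val_cons mul0n add0n in w_pos.
  have := zeck_100 w_pos (no_adjacent_ones_behead adj_w); tauto.
Qed.

Theorem theorem8 (n : nat) (s : seq bool) :
  0 < n -> zeck_rep n s ->
  ((forall m : nat, n < m -> (a n < a m)%R) <-> in_lang s).
Proof.
move=> _ [head_s adj <-].
exact: a_record_iff_in_lang.
Qed.
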